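(* Let $\sigma$ be a countable relational signature containing a relation symbol of arity at least $2$. Let $\mathbf P$ be any one of the properties ``$\mathrm{Aut}(\mathcal A)$ is finitely generated'', ``$\mathrm{Aut}(\mathcal A)$ is countably generated'', ``$\mathrm{Aut}(\mathcal A)$ is finitely presentable''. Then $\mathbf P$ is not expressible in $FO(\sigma)$; every abstract logic $L(\sigma)\geq FO(\sigma)$ that can express $\mathbf P$ fails the $\aleph_0$-compactness property; and every such logic which is moreover closed under negation has no sound and complete proof system.
   Context: $\mathrm{Aut}(\mathcal A)$ is the automorphism group of the $\sigma$-structure $\mathcal A$. An abstract logic over $\sigma$ is a pair $(L(\sigma),\models_{L(\sigma)})$ with the satisfaction relation between $\sigma$-structures and members of $L(\sigma)$ isomorphism-invariant; a class is expressed by it if some sentence is satisfied exactly by its members; $L(\sigma)\geq FO(\sigma)$ means every first-order expressible class is $L(\sigma)$-expressible; $\aleph_0$-compactness: every countable finitely satisfiable set of sentences is satisfiable; closed under negation: each sentence has a sentence true exactly where it is false. A proof system $(\Pi,p,c)$ assigns to each $\pi$ a finite sequence of premisses and a conclusion; sound: premisses semantically entail the conclusion; complete: whenever $\Gamma$ entails $\psi$ some $\pi$ has conclusion $\psi$ and all premisses in $\Gamma$. *)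

From Stdlib Require Import List Relations.
From Stdlib Require Vectors.Fin.
Import ListNotations.

Set Implicit Arguments.

Record signature := Signature {
  sym : Type;
  arity : sym -> nat
}.

Definition countable_signature (sg : signature) : Prop :=
  exists f : sym sg -> nat, forall s t, f s = f t -> s = t.

Record structure (sg : signature) := Structure {
  carrier :> Type;
  carrier_inhabited : inhabited carrier;
  rel : forall s : sym sg, (Fin.t (arity sg s) -> carrier) -> Prop
}.

Arguments rel {sg} _ _ _.

Record iso (sg : signature) (A B : structure sg) := Iso {
  iso_f : A -> B;
  iso_g : B -> A;
  iso_gf : forall a, iso_g (iso_f a) = a;
  iso_fg : forall b, iso_f (iso_g b) = b;
  iso_rel : forall s (t : Fin.t (arity sg s) -> A),
      rel A s t <-> rel B s (fun i => iso_f (t i))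
}.

(** Automorphisms (elements of Aut(A)); group operations are composition,
    inverse and identity, equality is pointwise equality of the maps. *)
Record aut (sg : signature) (A : structure sg) := Aut {
  af : A -> A;
  ag : A -> A;
  aut_gf : forall a, ag (af a) = a;
  aut_fg : forall a, af (ag a) = a;
  aut_rel : forall s (t : Fin.t (arity sg s) -> A),
      rel A s t <-> rel A s (fun i => af (t i))
}.

Arguments af {sg A} _ _.
Arguments ag {sg A} _ _.

Inductive in_gen (sg : signature) (A : structure sg) (X : aut A -> Prop)
  : aut A -> Prop :=
| gen_base : forall x h, X x -> (forall a, af h a = af x a) -> in_gen X h
| gen_id : forall h, (forall a, af h a = a) -> in_gen X h
| gen_mul : forall h1 h2 h, in_gen X h1 -> in_gen X h2 ->
    (forall a, af h a = af h1 (af h2 a)) -> in_gen X h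
| gen_inv : forall h1 h, in_gen X h1 ->
    (forall a, af h a = ag h1 a) -> in_gen X h.

Definition aut_fin_gen (sg : signature) (A : structure sg) : Prop :=
  exists l : list (aut A), forall h, in_gen (fun x => In x l) h.

Definition aut_count_gen (sg : signature) (A : structure sg) : Prop :=
  exists X : nat -> aut A, forall h, in_gen (fun x => exists n, X n = x) h.

(** Words over n letters and their inverses: (i, true) = x_i, (i, false) = x_i^-1. *)
Definition word (n : nat) := list (Fin.t n * bool).

Inductive wstep (n : nat) (rels : list (word n)) : word n -> word n -> Prop :=
| wstep_free : forall (u v : word n) i b,
    wstep rels (u ++ (i, b) :: (i, negb b) :: v) (u ++ v)
| wstep_rel : forall (u v r : word n), In r rels ->
    wstep rels (u ++ r ++ v) (u ++ v).

Definition wconv (n : nat) (rels : list (word n)) : word n -> word n -> Prop :=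
  clos_refl_sym_trans _ (wstep rels).

Fixpoint weval (sg : signature) (A : structure sg) (n : nat)
  (gens : Fin.t n -> aut A) (w : word n) : A -> A :=
  match w with
  | [] => fun a => a
  | (i, b) :: w' => fun a =>
      (if b then af (gens i) else ag (gens i)) (weval gens w' a)
  end.

(** Aut(A) is finitely presentable: the evaluation homomorphism from the free
    group on finitely many generators is onto Aut(A), with kernel the normal
    closure of finitely many relators. *)
Definition aut_fin_pres (sg : signature) (A : structure sg) : Prop :=
  exists (n : nat) (gens : Fin.t n -> aut A) (rels : list (word n)),
    (forall h : aut A, exists w : word n, forall a, weval gens w a = af h a) /\
    (forall w : word n, (forall a, weval gens w a = a) <-> wconv rels w []).

Inductive AutProperty := FinGen | CountGen | FinPres.

Definition has_property (P : AutProperty) (sg : signature) (A : structure sg) : Prop :=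
  match P with
  | FinGen => aut_fin_gen A
  | CountGen => aut_count_gen A
  | FinPres => aut_fin_pres A
  end.

Inductive formula (sg : signature) : Type :=
| FEq : nat -> nat -> formula sg
| FRel : forall s : sym sg, (Fin.t (arity sg s) -> nat) -> formula sg
| FNot : formula sg -> formula sg
| FAnd : formula sg -> formula sg -> formula sg
| FOr : formula sg -> formula sg -> formula sg
| FImp : formula sg -> formula sg -> formula sg
| FEx : nat -> formula sg -> formula sg
| FAll : nat -> formula sg -> formula sg.

Arguments FEq {sg}.
Arguments FRel {sg}.
Arguments FNot {sg}.
Arguments FAnd {sg}.
Arguments FOr {sg}.
Arguments FImp {sg}.
Arguments FEx {sg}.
Arguments FAll {sg}.

Inductive free_in (sg : signature) (x : nat) : formula sg -> Prop :=
| free_eq1 : forall y, free_in x (FEq x y)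
| free_eq2 : forall y, free_in x (FEq y x)
| free_rel : forall s args i, args i = x -> free_in x (FRel s args)
| free_not : forall f, free_in x f -> free_in x (FNot f)
| free_and1 : forall f g, free_in x f -> free_in x (FAnd f g)
| free_and2 : forall f g, free_in x g -> free_in x (FAnd f g)
| free_or1 : forall f g, free_in x f -> free_in x (FOr f g)
| free_or2 : forall f g, free_in x g -> free_in x (FOr f g)
| free_imp1 : forall f g, free_in x f -> free_in x (FImp f g)
| free_imp2 : forall f g, free_in x g -> free_in x (FImp f g)
| free_ex : forall y f, y <> x -> free_in x f -> free_in x (FEx y f)
| free_all : forall y f, y <> x -> free_in x f -> free_in x (FAll y f).

Definition is_sentence (sg : signature) (f : formula sg) : Prop :=
  forall x, ~ free_in x f.

Definition upd (T : Type) (v : nat -> T) (x : nat) (a : T) : nat -> T :=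
  fun y => if Nat.eqb y x then a else v y.

Fixpoint fo_sat (sg : signature) (A : structure sg) (v : nat -> A)
  (f : formula sg) : Prop :=
  match f with
  | FEq x y => v x = v y
  | FRel s args => rel A s (fun i => v (args i))
  | FNot g => ~ fo_sat A v g
  | FAnd g h => fo_sat A v g /\ fo_sat A v h
  | FOr g h => fo_sat A v g \/ fo_sat A v h
  | FImp g h => fo_sat A v g -> fo_sat A v h
  | FEx x g => exists a : A, fo_sat A (upd v x a) g
  | FAll x g => forall a : A, fo_sat A (upd v x a) g
  end.

Definition FO_expressible (sg : signature) (K : structure sg -> Prop) : Prop :=
  exists f : formula sg, is_sentence f /\
    forall A : structure sg, K A <-> (forall v : nat -> A, fo_sat A v f).

Record abstract_logic (sg : signature) := AbstractLogic {
  lsent : Type;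
  lsat : structure sg -> lsent -> Prop;
  lsat_iso : forall A B : structure sg, iso A B ->
      forall phi, lsat A phi <-> lsat B phi
}.

Arguments lsat {sg} _ _ _.

Definition L_expressible (sg : signature) (L : abstract_logic sg)
  (K : structure sg -> Prop) : Prop :=
  exists phi : lsent L, forall A, K A <-> lsat L A phi.

Definition extends_FO (sg : signature) (L : abstract_logic sg) : Prop :=
  forall K : structure sg -> Prop, FO_expressible K -> L_expressible L K.

(** aleph_0-compactness: every countable finitely satisfiable set of sentences
    is satisfiable (countable sets presented as enumerations; the empty set
    is trivially satisfiable). *)
Definition aleph0_compact (sg : signature) (L : abstract_logic sg) : Prop :=
  forall Gamma : nat -> lsent L,
    (forall n, exists A, forall i, i <= n -> lsat L A (Gamma i)) ->
    exists A, forall i, lsat L A (Gamma i).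

Definition closed_under_negation (sg : signature) (L : abstract_logic sg) : Prop :=
  forall phi : lsent L, exists psi : lsent L,
    forall A, lsat L A psi <-> ~ lsat L A phi.

Definition entails (sg : signature) (L : abstract_logic sg)
  (Gamma : lsent L -> Prop) (psi : lsent L) : Prop :=
  forall A, (forall phi, Gamma phi -> lsat L A phi) -> lsat L A psi.

Record proof_system (sg : signature) (L : abstract_logic sg) := ProofSystem {
  proofs : Type;
  premisses : proofs -> list (lsent L);
  conclusion : proofs -> lsent L
}.

Arguments premisses {sg L p} _.
Arguments conclusion {sg L p} _.

Definition sound (sg : signature) (L : abstract_logic sg) (PS : proof_system L) : Prop :=
  forall pi : proofs PS,
    entails L (fun phi => In phi (premisses pi)) (conclusion pi).

Definition complete (sg : signature) (L : abstract_logic sg) (PS : proof_system L) : Prop :=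
  forall (Gamma : lsent L -> Prop) (psi : lsent L), entails L Gamma psi ->
    exists pi : proofs PS, conclusion pi = psi /\
      forall phi, In phi (premisses pi) -> Gamma phi.

(* The whole argument takes place among the bare structures (all relations
   empty). If Aut(A) is finite, A has all three properties; in particular every
      finite structure does.  Finite presentability comes from the
      multiplication table: generators are all automorphisms, relators are all
      words of length at most 3 that evaluate to the identity.
   2. Each property yields a countable family of words whose evaluations cover
      Aut(A).  For an infinite bare structure this is impossible: a diagonal
      argument over involutions swapping disjoint pairs shows Aut(A) is
      uncountable.  So infinite bare structures have none of the properties.
   3. An Ehrenfeucht-Fraisse argument: a sentence of quantifier depth d does not
      distinguish two bare structures with at least d elements.  With 1 and 2
      this shows that P is not first-order expressible.
   4. Enumerating sg, the sentences "at least n elements, and the relations of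
      code below n are empty" together with a sentence expressing P form a
      finitely satisfiable (by 1) but unsatisfiable (by 2) countable set.
   5. A sound and complete proof system for a logic closed under negation makes
      it aleph_0-compact, which 4 rules out. *)
From Stdlib Require Import Arith List Relations Lia FinFun
  Classical ClassicalEpsilon FunctionalExtensionality.
From Stdlib Require Vectors.Fin Arith.Cantor Logic.Eqdep.
Import ListNotations.

Section AutGroup.
Context {sg : signature} {A : structure sg}.

Definition id_aut : aut A.
Proof. refine (@Aut sg A (fun a => a) (fun a => a) _ _ _); reflexivity. Defined.

Definition inv_aut (h : aut A) : aut A.
Proof.
  refine (@Aut sg A (ag h) (af h) (aut_fg h) (aut_gf h) _).
  intros s t. rewrite (aut_rel h s (fun i => ag h (t i))).
  replace (fun i => af h (ag h (t i))) with t; [reflexivity|].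
  apply functional_extensionality; intro i; now rewrite aut_fg.
Defined.

Definition comp_aut (h1 h2 : aut A) : aut A.
Proof.
  refine (@Aut sg A (fun a => af h1 (af h2 a)) (fun a => ag h2 (ag h1 a)) _ _ _).
  - intro a; now rewrite !aut_gf.
  - intro a; now rewrite !aut_fg.
  - intros s t. rewrite (aut_rel h2 s t). apply (aut_rel h1 s (fun i => af h2 (t i))).
Defined.

Fixpoint evalw {I : Type} (X : I -> aut A) (w : list (I * bool)) : A -> A :=
  match w with
  | [] => fun a => a
  | (i, b) :: w' => fun a => (if b then af (X i) else ag (X i)) (evalw X w' a)
  end.

Lemma evalw_app {I : Type} (X : I -> aut A) u v a :
  evalw X (u ++ v) a = evalw X u (evalw X v a).
Proof. induction u as [|[i b] u IH]; simpl; congruence. Qed.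

Lemma weval_evalw n (gens : Fin.t n -> aut A) w a : weval gens w a = evalw gens w a.
Proof. induction w as [|[i b] w IH]; simpl; congruence. Qed.

Lemma evalw_aut {I : Type} (X : I -> aut A) w :
  exists h : aut A, forall a, af h a = evalw X w a.
Proof.
  induction w as [|[i b] w [h Hh]].
  - exists id_aut; reflexivity.
  - exists (comp_aut (if b then X i else inv_aut (X i)) h).
    intro a; simpl; rewrite Hh; destruct b; reflexivity.
Qed.

End AutGroup.

Definition aut_finite {sg : signature} (A : structure sg) : Prop :=
  exists L : list (aut A), forall h, exists x, In x L /\ forall a, af x a = af h a.

Fixpoint tuples {X : Type} (l : list X) (k : nat) : list (list X) :=
  match k with
  | 0 => [[]]
  | S k' => flat_map (fun x => map (cons x) (tuples l k')) l
  end.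

Lemma tuples_complete {X : Type} (l : list X) t :
  (forall x, In x t -> In x l) -> In t (tuples l (length t)).
Proof.
  induction t as [|x t IH]; intro H; simpl; [now left|].
  apply in_flat_map. exists x. split; [apply H; now left|].
  apply in_map, IH. intros y Hy; apply H; now right.
Qed.

Fixpoint all_fin (k : nat) : list (Fin.t k) :=
  match k with 0 => [] | S m => Fin.F1 :: map Fin.FS (all_fin m) end.

Lemma all_fin_complete k (i : Fin.t k) : In i (all_fin k).
Proof. induction i; simpl; auto using in_map. Qed.

Lemma all_fin_NoDup k : NoDup (all_fin k).
Proof.
  induction k as [|k IH]; simpl; constructor.
  - intro H. apply in_map_iff in H. destruct H as [i [E _]]. discriminate.
  - apply Injective_map_NoDup; [exact (@Fin.FS_inj k)|exact IH].
Qed.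

Lemma all_fin_length k : length (all_fin k) = k.
Proof. induction k; simpl; rewrite ?length_map; auto. Qed.

Section MultiplicationTable.
Context {sg : signature} {A : structure sg} {n : nat} (gens : Fin.t n -> aut A).
Hypothesis gens_cover : forall h : aut A, exists i, forall a, af (gens i) a = af h a.

Definition trivial_word (w : word n) : Prop := forall a, evalw gens w a = a.

Definition short_words : list (word n) :=
  flat_map (tuples (list_prod (all_fin n) [true; false])) [1; 2; 3].

Definition relators : list (word n) :=
  filter (fun w => if excluded_middle_informative (trivial_word w) then true else false)
    short_words.

Lemma relators_complete w : 1 <= length w <= 3 -> trivial_word w -> In w relators.
Proof.
  intros Hlen Htriv. apply filter_In. split.
  - apply in_flat_map. exists (length w). split; [simpl; lia|].
    apply tuples_complete. intros [i b] _. apply in_prod; [apply all_fin_complete|].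
    destruct b; simpl; auto.
  - destruct excluded_middle_informative; tauto.
Qed.

Lemma relators_trivial w : In w relators -> trivial_word w.
Proof.
  intro H. apply filter_In in H. destruct H as [_ H].
  destruct excluded_middle_informative; [assumption|discriminate].
Qed.

(* The relators hold in Aut(A), so convertible words evaluate equally. *)
Lemma wconv_sound {w w'} : wconv relators w w' -> forall a, evalw gens w a = evalw gens w' a.
Proof.
  induction 1 as [w w' Hstep| | |]; intro a; try congruence.
  destruct Hstep as [u v i b|u v r Hr]; rewrite !evalw_app.
  - simpl. destruct b; simpl; [rewrite aut_fg|rewrite aut_gf]; reflexivity.
  - now rewrite (relators_trivial _ Hr).
Qed.

Lemma absorb u k w : In (u ++ [(k, false)]) relators ->
  wconv relators (u ++ w) ((k, true) :: w).
Proof.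
  intro Hr. apply rst_trans with (u ++ (k, false) :: (k, true) :: w).
  - apply rst_sym, rst_step. exact (wstep_free relators u w k false).
  - apply rst_step.
    replace (u ++ (k, false) :: (k, true) :: w) with ([] ++ (u ++ [(k, false)]) ++ (k, true) :: w)
      by (simpl; rewrite <- app_assoc; reflexivity).
    exact (wstep_rel relators [] ((k, true) :: w) _ Hr).
Qed.

(* Any prefix of length 1 or 2 equals some generator, hence is absorbed. *)
Lemma absorb_short u w : 1 <= length u <= 2 ->
  exists k, wconv relators (u ++ w) ((k, true) :: w).
Proof.
  intro Hlen. destruct (evalw_aut gens u) as [h Hh]. destruct (gens_cover h) as [k Hk].
  exists k. apply absorb, relators_complete.
  - rewrite length_app. simpl. lia.
  - intro a. rewrite evalw_app. simpl. rewrite <- Hh, <- Hk. apply aut_fg.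
Qed.

Lemma reduce_to_generator w : forall l, exists k, wconv relators (l :: w) [(k, true)].
Proof.
  induction w as [|l2 w IH]; intro l.
  - exact (absorb_short [l] [] ltac:(simpl; lia)).
  - destruct (absorb_short [l; l2] w ltac:(simpl; lia)) as [k0 H0].
    destruct (IH (k0, true)) as [k Hk]. exists k. exact (rst_trans _ _ _ _ _ H0 Hk).
Qed.

Lemma multiplication_table_presentation : aut_fin_pres A.
Proof.
  exists n, gens, relators. split.
  - intro h. destruct (gens_cover h) as [i Hi]. exists [(i, true)]. exact Hi.
  - intro w. split.
    + intro Htriv. destruct w as [|l w]; [apply rst_refl|].
      destruct (reduce_to_generator w l) as [k Hk]. apply rst_trans with [(k, true)]; [exact Hk|].
      apply rst_step, (wstep_rel relators [] [] [(k, true)]), relators_complete; [simpl; lia|].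
      intro a. rewrite <- (wconv_sound Hk a), <- weval_evalw. apply Htriv.
    + intros H a. rewrite weval_evalw, (wconv_sound H a). reflexivity.
Qed.

End MultiplicationTable.

Lemma finite_aut_gens {sg : signature} {A : structure sg} : aut_finite A ->
  exists n (gens : Fin.t n -> aut A), forall h, exists i, forall a, af (gens i) a = af h a.
Proof.
  intros [L HL]. exists (length L), (fun i => nth (proj1_sig (Fin.to_nat i)) L id_aut).
  intro h. destruct (HL h) as [x [Hx Hxh]]. destruct (In_nth L x id_aut Hx) as [k [Hk Hkx]].
  exists (Fin.of_nat_lt Hk). rewrite Fin.to_nat_of_nat. simpl. rewrite Hkx. exact Hxh.
Qed.

Lemma finite_aut_has_property {sg : signature} (A : structure sg) P :
  aut_finite A -> has_property P A.
Proof.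
  intro Hfin. destruct P; simpl.
  - destruct Hfin as [L HL]. exists L. intro h. destruct (HL h) as [x [Hx Hxh]].
    apply (gen_base _ x); [exact Hx|]. intro a; symmetry; apply Hxh.
  - destruct Hfin as [L HL]. exists (fun k => nth k L id_aut). intro h.
    destruct (HL h) as [x [Hx Hxh]]. apply (gen_base _ x).
    + destruct (In_nth L x id_aut Hx) as [k [_ Hk]]. now exists k.
    + intro a; symmetry; apply Hxh.
  - destruct (finite_aut_gens Hfin) as [n [gens Hgens]].
    exact (multiplication_table_presentation gens Hgens).
Qed.

(* A structure with finite carrier has finite automorphism group: an
   automorphism is determined by its list of values on the carrier. *)
Lemma finite_structure_aut_finite {sg : signature} (A : structure sg) (l : list A) :
  (forall a, In a l) -> aut_finite A.
Proof.
  intro Hl.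
  set (pick t := epsilon (inhabits id_aut) (fun h : aut A => map (af h) l = t)).
  exists (map pick (tuples l (length l))). intro h. exists (pick (map (af h) l)). split.
  - apply in_map. rewrite <- (length_map (af h) l). apply tuples_complete. intros x _; apply Hl.
  - assert (E : map (af (pick (map (af h) l))) l = map (af h) l)
      by (apply (epsilon_spec (inhabits id_aut) (fun x : aut A => map (af x) l = map (af h) l));
          now exists h).
    intro a. exact (proj1 map_ext_in_iff E a (Hl a)).
Qed.

Definition countable (X : Type) : Prop := exists c : X -> nat, Injective c.

Lemma countable_nat : countable nat.
Proof. now exists (fun k => k). Qed.

Lemma countable_bool : countable bool.
Proof. exists (fun b : bool => if b then 1 else 0). now intros [|] [|]. Qed.

Lemma countable_fin n : countable (Fin.t n).
Proof. exists (fun i => proj1_sig (Fin.to_nat i)). exact (@Fin.to_nat_inj n). Qed.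

Lemma cantor_injective : Injective Cantor.to_nat.
Proof.
  intros p q E. now rewrite <- (Cantor.cancel_of_to p), <- (Cantor.cancel_of_to q), E.
Qed.

Lemma countable_prod X Y : countable X -> countable Y -> countable (X * Y).
Proof.
  intros [cx Hx] [cy Hy]. exists (fun p => Cantor.to_nat (cx (fst p), cy (snd p))).
  intros [x y] [x' y'] E. apply cantor_injective in E. injection E as E1 E2.
  now rewrite (Hx _ _ E1), (Hy _ _ E2).
Qed.

Fixpoint list_code {X : Type} (c : X -> nat) (l : list X) : nat :=
  match l with [] => 0 | x :: l' => S (Cantor.to_nat (c x, list_code c l')) end.

Lemma countable_list X : countable X -> countable (list X).
Proof.
  intros [c Hc]. exists (list_code c).
  intro l. induction l as [|x l IH]; intros [|y m] E; try discriminate; [reflexivity|].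
  apply eq_add_S, cantor_injective in E. injection E as E1 E2.
  now rewrite (Hc _ _ E1), (IH _ E2).
Qed.

Definition aut_countably_covered {sg : signature} (A : structure sg) : Prop :=
  exists (W : Type) (F : W -> A -> A),
    countable W /\ forall h : aut A, exists w, forall a, F w a = af h a.

Definition inv_word {I : Type} (w : list (I * bool)) : list (I * bool) :=
  rev (map (fun p => (fst p, negb (snd p))) w).

Lemma evalw_inv_word {sg : signature} {A : structure sg} {I : Type} (X : I -> aut A) w a :
  evalw X (inv_word w) (evalw X w a) = a.
Proof.
  induction w as [|[i b] w IH]; simpl; auto. unfold inv_word in *. simpl.
  rewrite evalw_app. simpl. destruct b; simpl; [rewrite aut_gf|rewrite aut_fg]; apply IH.
Qed.

Lemma in_gen_word {sg : signature} {A : structure sg} (X : nat -> aut A) {h : aut A} :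
  in_gen (fun x => exists k, X k = x) h -> exists w, forall a, evalw X w a = af h a.
Proof.
  induction 1 as [x h [k <-] Hx|h Hh|h1 h2 h _ [w1 H1] _ [w2 H2] Hh|h1 h _ [w1 H1] Hh].
  - exists [(k, true)]. intro a. symmetry; apply Hx.
  - exists []. intro a. symmetry; apply Hh.
  - exists (w1 ++ w2). intro a. now rewrite evalw_app, H2, H1.
  - exists (inv_word w1). intro a. rewrite Hh, <- (aut_fg h1 a) at 1. rewrite <- H1.
    apply evalw_inv_word.
Qed.

Lemma in_gen_mono {sg : signature} {A : structure sg} {X Y : aut A -> Prop} {h : aut A} :
  (forall x, X x -> Y x) -> in_gen X h -> in_gen Y h.
Proof.
  intro HXY. induction 1 as [x h Hx Hh|h Hh|h1 h2 h _ IH1 _ IH2 Hh|h1 h _ IH Hh].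
  - exact (gen_base Y x h (HXY x Hx) Hh).
  - exact (gen_id Y h Hh).
  - eapply gen_mul; [exact IH1|exact IH2|exact Hh].
  - eapply gen_inv; [exact IH|exact Hh].
Qed.

Lemma fin_gen_count_gen {sg : signature} {A : structure sg} : aut_fin_gen A -> aut_count_gen A.
Proof.
  intros [L HL]. exists (fun k => nth k L id_aut). intro h.
  apply (in_gen_mono (X := fun x => In x L)); [|apply HL]. intros x Hx.
  destruct (In_nth L x id_aut Hx) as [k [_ Hk]]. now exists k.
Qed.

Lemma has_property_countably_covered {sg : signature} (A : structure sg) P :
  has_property P A -> aut_countably_covered A.
Proof.
  assert (count_gen : aut_count_gen A -> aut_countably_covered A).
  { intros [X HX]. exists (list (nat * bool)), (evalw X). split.
    - apply countable_list, countable_prod; [apply countable_nat|apply countable_bool].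
    - intro h. exact (in_gen_word X (HX h)). }
  destruct P; simpl.
  - intro H. exact (count_gen (fin_gen_count_gen H)).
  - exact count_gen.
  - intros [n [gens [rels [Hcover _]]]]. exists (word n), (weval gens). split; [|exact Hcover].
    apply countable_list, countable_prod; [apply countable_fin|apply countable_bool].
Qed.

(* All relations of A are empty; then every permutation is an automorphism. *)
Definition rel_free {sg : signature} (A : structure sg) : Prop := forall s t, ~ rel A s t.

(* Given an injective family e of pairwise disjoint pairs {e (k,false), e (k,true)}
   in a bare structure, each d : nat -> bool defines the involution swapping
   exactly the pairs k with d k = true. *)
Section Uncountable.
Context {sg : signature} {A : structure sg}.
Hypothesis A_rel_free : rel_free A.
Context {e : nat * bool -> A}.
Hypothesis e_inj : Injective e.

Definition decode (x : A) : option (nat * bool) :=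
  match excluded_middle_informative (exists p, e p = x) with
  | left H => Some (proj1_sig (constructive_indefinite_description _ H))
  | right _ => None
  end.

Lemma decode_e p : decode (e p) = Some p.
Proof.
  unfold decode. destruct excluded_middle_informative as [H|H]; [|now elim H; exists p].
  destruct constructive_indefinite_description as [q Hq]. simpl. now apply e_inj in Hq; subst q.
Qed.

Lemma decode_cases x : (exists p, x = e p) \/ decode x = None.
Proof.
  unfold decode. destruct excluded_middle_informative as [[p Hp]|H]; [left|right]; eauto.
Qed.

Variable d : nat -> bool.

Definition flip (x : A) : A :=
  match decode x with
  | Some (k, b) => if d k then e (k, negb b) else x
  | None => x
  end.

Lemma flip_e k b : flip (e (k, b)) = if d k then e (k, negb b) else e (k, b).
Proof. unfold flip. now rewrite decode_e. Qed.

Lemma flip_involutive x : flip (flip x) = x.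
Proof.
  destruct (decode_cases x) as [[[k b] ->]|Hx].
  - rewrite flip_e. destruct (d k) eqn:Hd; rewrite flip_e, Hd; [now rewrite Bool.negb_involutive|].
    reflexivity.
  - unfold flip. now rewrite Hx, Hx.
Qed.

Definition flip_aut : aut A.
Proof.
  refine (@Aut sg A flip flip flip_involutive flip_involutive _).
  intros s t. split; intro H; exfalso; eapply A_rel_free; exact H.
Defined.

End Uncountable.

(* Step 2, second half: the involutions cannot all be covered by a countable
   family of maps; diagonalise against the k-th map on the k-th pair. *)
Lemma rel_free_aut_uncountable {sg : signature} {A : structure sg} (e : nat * bool -> A) :
  rel_free A -> Injective e -> ~ aut_countably_covered A.
Proof.
  intros Hfree e_inj (W & F & [c c_inj] & Hcover).
  set (d k := if excluded_middle_informative
                   (exists w, c w = k /\ F w (e (k, false)) = e (k, true)) then false else true).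
  destruct (Hcover (flip_aut Hfree e_inj d)) as [w Hw].
  specialize (Hw (e (c w, false))). cbn [af flip_aut] in Hw. rewrite (flip_e e_inj) in Hw.
  unfold d in Hw. destruct excluded_middle_informative as [[w' [Hc Hf]]|Hn]; simpl in Hw.
  - apply c_inj in Hc. subst w'. rewrite Hw in Hf. apply e_inj in Hf. discriminate.
  - apply Hn. now exists w.
Qed.

Definition at_least (X : Type) (K : nat) : Prop :=
  forall l : list X, length l < K -> exists x, ~ In x l.

Definition infinite (X : Type) : Prop := forall l : list X, exists x, ~ In x l.

Lemma at_least_mono X K K' : K' <= K -> at_least X K -> at_least X K'.
Proof. intros HK H l Hl. apply H. lia. Qed.

Lemma at_least_NoDup X (l' : list X) : NoDup l' -> at_least X (length l').
Proof.
  intros Hnd l Hl. apply NNPP. intro Hall.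
  assert (Hincl : incl l' l) by (intros x Hx; apply NNPP; intro Hn; apply Hall; now exists x).
  pose proof (NoDup_incl_length Hnd Hincl). lia.
Qed.

Lemma infinite_at_least X : (forall K, at_least X K) -> infinite X.
Proof. intros H l. apply (H (S (length l))). lia. Qed.

Section FreshSequence.
Context {X : Type}.
Hypothesis X_infinite : infinite X.

Definition fresh (l : list X) : X :=
  proj1_sig (constructive_indefinite_description _ (X_infinite l)).

Lemma fresh_spec l : ~ In (fresh l) l.
Proof. exact (proj2_sig (constructive_indefinite_description _ (X_infinite l))). Qed.

Fixpoint first_fresh (k : nat) : list X :=
  match k with 0 => [] | S k' => fresh (first_fresh k') :: first_fresh k' end.

Definition fresh_seq (k : nat) : X := fresh (first_fresh k).

Lemma fresh_seq_earlier i j : i < j -> In (fresh_seq i) (first_fresh j).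
Proof.
  induction j as [|j IH]; intro H; [lia|]. simpl.
  destruct (Nat.eq_dec i j) as [->|Hne]; [now left|right; apply IH; lia].
Qed.

Lemma fresh_seq_injective : Injective fresh_seq.
Proof.
  intros i j E. destruct (Nat.lt_total i j) as [H|[H|H]]; [exfalso| assumption |exfalso].
  - apply (fresh_spec (first_fresh j)). fold (fresh_seq j). rewrite <- E.
    now apply fresh_seq_earlier.
  - apply (fresh_spec (first_fresh i)). fold (fresh_seq i). rewrite E.
    now apply fresh_seq_earlier.
Qed.

End FreshSequence.

Lemma rel_free_infinite_no_property {sg : signature} {A : structure sg} (P : AutProperty) :
  rel_free A -> infinite A -> ~ has_property P A.
Proof.
  intros Hfree Hinf HP.
  set (e (p : nat * bool) := fresh_seq Hinf (2 * fst p + if snd p then 1 else 0)).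
  assert (e_inj : Injective e).
  { intros [k b] [k' b'] E. apply fresh_seq_injective in E. simpl in E.
    destruct b, b'; f_equal; lia. }
  exact (rel_free_aut_uncountable e Hfree e_inj (has_property_countably_covered A P HP)).
Qed.

Section EhrenfeuchtFraisse.
Context {sg : signature}.

Lemma upd_other {X : Type} (v : nat -> X) x a y : y <> x -> upd v x a y = v y.
Proof. intro H. unfold upd. now rewrite (proj2 (Nat.eqb_neq y x) H). Qed.

Lemma upd_same {X : Type} (v : nat -> X) x a : upd v x a x = a.
Proof. unfold upd. now rewrite Nat.eqb_refl. Qed.

Lemma fo_sat_ext (A : structure sg) (f : formula sg) : forall v w : nat -> A,
  (forall x, v x = w x) -> (fo_sat A v f <-> fo_sat A w f).
Proof.
  induction f as [x y|s args|f IH|f IHf g IHg|f IHf g IHg|f IHf g IHg|x f IH|x f IH];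
    intros v w Hvw; simpl.
  - now rewrite !Hvw.
  - replace (fun i => v (args i)) with (fun i => w (args i)); [reflexivity|].
    apply functional_extensionality; intro; now rewrite Hvw.
  - now rewrite (IH v w Hvw).
  - now rewrite (IHf v w Hvw), (IHg v w Hvw).
  - now rewrite (IHf v w Hvw), (IHg v w Hvw).
  - now rewrite (IHf v w Hvw), (IHg v w Hvw).
  - split; intros [a Ha]; exists a; (eapply IH; [|exact Ha]);
      intro y; unfold upd; destruct (Nat.eqb y x); auto.
  - split; intros Ha a; (eapply IH; [|exact (Ha a)]);
      intro y; unfold upd; destruct (Nat.eqb y x); auto.
Qed.

Fixpoint qdepth (f : formula sg) : nat :=
  match f with
  | FEq _ _ | FRel _ _ => 0
  | FNot g => qdepth g
  | FAnd g h | FOr g h | FImp g h => max (qdepth g) (qdepth h)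
  | FEx _ g | FAll _ g => S (qdepth g)
  end.

Definition same_eq_type {X Y : Type} (V : list nat) (v : nat -> X) (w : nat -> Y) : Prop :=
  forall y z, In y V -> In z V -> (v y = v z <-> w y = w z).

Lemma same_eq_type_sym {X Y : Type} {V : list nat} {v : nat -> X} {w : nat -> Y} :
  same_eq_type V v w -> same_eq_type V w v.
Proof. intros H y z Hy Hz. now rewrite (H y z Hy Hz). Qed.

Lemma same_eq_type_extend {X Y : Type} {V : list nat} {v : nat -> X} {w : nat -> Y} x (a : X) :
  same_eq_type V v w -> at_least Y (S (length V)) ->
  exists b, same_eq_type (x :: V) (upd v x a) (upd w x b).
Proof.
  intros Hc Hroom.
  assert (Hb : exists b, forall z, In z V -> (a = v z <-> b = w z)).
  { destruct (classic (exists y, In y V /\ v y = a)) as [[y [Hy <-]]|Hnew].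
    - exists (w y). intros z Hz. now apply Hc.
    - destruct (Hroom (map w V)) as [b Hb]; [rewrite length_map; lia|].
      exists b. intros z Hz. split; intro E; exfalso.
      + apply Hnew. eauto.
      + apply Hb. subst. now apply in_map. }
  destruct Hb as [b Hb]. exists b. intros y z Hy Hz. unfold upd.
  destruct (Nat.eqb_spec y x) as [Ey|Ey], (Nat.eqb_spec z x) as [Ez|Ez].
  - tauto.
  - destruct Hz as [Hz|Hz]; [congruence|]. now apply Hb.
  - destruct Hy as [Hy|Hy]; [congruence|]. split; intro E; symmetry; apply Hb; auto.
  - destruct Hy as [Hy|Hy]; [congruence|]. destruct Hz as [Hz|Hz]; [congruence|]. now apply Hc.
Qed.

Lemma rel_free_fo_equiv {A B : structure sg} : rel_free A -> rel_free B ->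
  forall f V v w, (forall x, free_in x f -> In x V) -> same_eq_type V v w ->
  at_least A (length V + qdepth f) -> at_least B (length V + qdepth f) ->
  (fo_sat A v f <-> fo_sat B w f).
Proof.
  intros HA HB f.
  induction f as [x y|s args|f IH|f IHf g IHg|f IHf g IHg|f IHf g IHg|x f IH|x f IH];
    intros V v w Hfree Hc RA RB; simpl in *.
  4-6: rewrite (IHf V v w), (IHg V v w); try reflexivity; try assumption;
       try (intros z Hz; apply Hfree; eauto using free_in);
       eapply at_least_mono; try eassumption; lia.
  4-5: assert (Hfree' : forall z, free_in z f -> In z (x :: V))
         by (intros z Hz; destruct (Nat.eq_dec x z);
             [now left|right; apply Hfree; now constructor]);
       assert (RA' : at_least A (length (x :: V) + qdepth f))
         by (eapply at_least_mono; [|exact RA]; simpl; lia);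
       assert (RB' : at_least B (length (x :: V) + qdepth f))
         by (eapply at_least_mono; [|exact RB]; simpl; lia);
       (* one round of the back-and-forth game, started on either side *)
       assert (forth : forall a, exists b, fo_sat A (upd v x a) f <-> fo_sat B (upd w x b) f)
         by (intro a; destruct (same_eq_type_extend x a Hc) as [b Hb];
             [eapply at_least_mono; [|exact RB]; lia|exists b; exact (IH _ _ _ Hfree' Hb RA' RB')]);
       assert (back : forall b, exists a, fo_sat A (upd v x a) f <-> fo_sat B (upd w x b) f)
         by (intro b; destruct (same_eq_type_extend x b (same_eq_type_sym Hc)) as [a Ha];
             [eapply at_least_mono; [|exact RA]; lia|
              exists a; exact (IH _ _ _ Hfree' (same_eq_type_sym Ha) RA' RB')]).
  - apply Hc; apply Hfree; constructor.
  - split; intro H; exfalso; [eapply HA|eapply HB]; exact H.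
  - rewrite (IH V v w); [reflexivity| |assumption..]. intros z Hz; apply Hfree; now constructor.
  - split; [intros [a Ha]; destruct (forth a) as [b Hb]; exists b
           |intros [b Hb]; destruct (back b) as [a Ha]; exists a]; tauto.
  - split; [intros H b; destruct (back b) as [a Ha]; specialize (H a)
           |intros H a; destruct (forth a) as [b Hb]; specialize (H b)]; tauto.
Qed.

Lemma rel_free_sentence_transfer {A B : structure sg} {f : formula sg} :
  rel_free A -> rel_free B -> is_sentence f ->
  at_least A (qdepth f) -> at_least B (qdepth f) ->
  (forall v, fo_sat A v f) -> forall w, fo_sat B w f.
Proof.
  intros HA HB Hsent RA RB Hf w. destruct (carrier_inhabited A) as [a0].
  refine (proj1 (rel_free_fo_equiv HA HB f [] (fun _ => a0) w _ _ RA RB) (Hf _)).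
  - intros x Hx. exact (Hsent x Hx).
  - intros y z [].
Qed.

End EhrenfeuchtFraisse.

Definition bare (sg : signature) (X : Type) (x0 : X) : structure sg :=
  @Structure sg X (inhabits x0) (fun _ _ => False).
Arguments bare : clear implicits.

Lemma bare_rel_free sg X (x0 : X) : rel_free (bare sg X x0).
Proof. intros s t H. exact H. Qed.

Definition finite_bare (sg : signature) (m : nat) : structure sg := bare sg (Fin.t (S m)) Fin.F1.

Definition nat_bare (sg : signature) : structure sg := bare sg nat 0.

Lemma finite_bare_has_property sg m P : has_property P (finite_bare sg m).
Proof.
  apply finite_aut_has_property, (finite_structure_aut_finite (finite_bare sg m) (all_fin (S m))).
  apply all_fin_complete.
Qed.

Lemma finite_bare_at_least sg m K : K <= S m -> at_least (finite_bare sg m) K.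
Proof.
  intro HK. apply at_least_mono with (length (all_fin (S m))).
  - now rewrite all_fin_length.
  - apply at_least_NoDup, all_fin_NoDup.
Qed.

Lemma nat_infinite : infinite nat.
Proof.
  intro l. exists (S (list_max l)). intro H.
  pose proof (proj1 (list_max_le l (list_max l)) (le_n _)) as Hbound.
  rewrite Forall_forall in Hbound. specialize (Hbound _ H). lia.
Qed.

(* Part 1 of the theorem: a sentence expressing P would hold in a large finite
   bare structure, hence in the infinite bare structure on nat. *)
Lemma property_not_FO_expressible sg P :
  ~ FO_expressible (fun A : structure sg => has_property P A).
Proof.
  intros [f [Hsent Hf]].
  assert (HN : has_property P (nat_bare sg)).
  { apply Hf. refine (rel_free_sentence_transfer (bare_rel_free _ _ _) (bare_rel_free _ _ _)
      Hsent _ _ (proj1 (Hf _) (finite_bare_has_property sg (qdepth f) P))).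
    - apply finite_bare_at_least. lia.
    - intros l _. apply nat_infinite. }
  exact (rel_free_infinite_no_property P (bare_rel_free sg nat 0) nat_infinite HN).
Qed.

Section Sentences.
Context {sg : signature}.

Lemma free_not_inv {x} {f : formula sg} : free_in x (FNot f) -> free_in x f.
Proof. inversion 1; auto. Qed.

Lemma free_and_inv {x} {f g : formula sg} : free_in x (FAnd f g) -> free_in x f \/ free_in x g.
Proof. inversion 1; auto. Qed.

Lemma free_eq_inv {x y z} : free_in x (@FEq sg y z) -> x = y \/ x = z.
Proof. inversion 1; auto. Qed.

Lemma free_ex_inv {x y} {f : formula sg} : free_in x (FEx y f) -> y <> x /\ free_in x f.
Proof. inversion 1; auto. Qed.

Lemma free_all_inv {x y} {f : formula sg} : free_in x (FAll y f) -> y <> x /\ free_in x f.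
Proof. inversion 1; auto. Qed.

Lemma free_rel_inv {x s} {args : Fin.t (arity sg s) -> nat} :
  free_in x (FRel s args) -> exists i, args i = x.
Proof.
  intro H. remember (FRel s args) as g eqn:Eg. destruct H; try discriminate.
  injection Eg as Es Ea. subst. apply Eqdep.EqdepTheory.inj_pair2 in Ea. subst. eauto.
Qed.

Lemma is_sentence_and (f g : formula sg) :
  is_sentence f -> is_sentence g -> is_sentence (FAnd f g).
Proof. intros Hf Hg x Hx. destruct (free_and_inv Hx); [eapply Hf|eapply Hg]; eassumption. Qed.

Definition truef : formula sg := FAll 0 (FEq 0 0).

Lemma truef_sentence : is_sentence truef.
Proof. intros x Hx. apply free_all_inv in Hx as [H0 Hx]. apply free_eq_inv in Hx. lia. Qed.

Lemma truef_sat (A : structure sg) v : fo_sat A v truef.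
Proof. intro a. reflexivity. Qed.

Fixpoint distinct_from (x k : nat) : formula sg :=
  match k with 0 => truef | S j => FAnd (distinct_from x j) (FNot (FEq x j)) end.

Fixpoint exist_new (n k : nat) : formula sg :=
  match n with
  | 0 => truef
  | S n' => FEx k (FAnd (distinct_from k k) (exist_new n' (S k)))
  end.

Definition at_least_sentence (n : nat) : formula sg := exist_new n 0.

Lemma distinct_from_sat (A : structure sg) v x k :
  fo_sat A v (distinct_from x k) <-> forall i, i < k -> v x <> v i.
Proof.
  induction k as [|k IH]; simpl.
  - split; [lia|intros _; apply truef_sat].
  - rewrite IH. split.
    + intros [H1 H2] i Hi. destruct (Nat.eq_dec i k) as [->|]; [exact H2|apply H1; lia].
    + intro H; split; [intros i Hi|]; apply H; lia.
Qed.

Lemma distinct_from_free {x y k} : free_in x (distinct_from y k) -> x = y \/ x < k.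
Proof.
  induction k as [|k IH]; simpl; intro H.
  - exfalso; exact (truef_sentence x H).
  - destruct (free_and_inv H) as [H1|H1].
    + destruct (IH H1); [left|right; lia]; assumption.
    + apply free_not_inv, free_eq_inv in H1. destruct H1; [left|right; lia]; assumption.
Qed.

Lemma exist_new_free n : forall k x, free_in x (exist_new n k) -> x < k.
Proof.
  induction n as [|n IH]; simpl; intros k x H.
  - exfalso; exact (truef_sentence x H).
  - apply free_ex_inv in H as [Hk H]. destruct (free_and_inv H) as [H1|H1].
    + destruct (distinct_from_free H1); lia.
    + apply IH in H1. lia.
Qed.

Lemma exist_new_of_at_least (A : structure sg) n :
  forall k v, at_least A (k + n) -> fo_sat A v (exist_new n k).
Proof.
  induction n as [|n IH]; intros k v Hroom; simpl; [apply truef_sat|].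
  destruct (Hroom (map v (seq 0 k))) as [a Ha]; [rewrite length_map, length_seq; lia|].
  exists a. split.
  - apply distinct_from_sat. intros i Hi. rewrite upd_same, upd_other by lia.
    intros ->. apply Ha, in_map, in_seq. lia.
  - apply IH. eapply at_least_mono; [|exact Hroom]. lia.
Qed.

Lemma exist_new_list (A : structure sg) n : forall k v, fo_sat A v (exist_new n k) ->
  exists l, length l = n /\ NoDup l /\ forall a, In a l -> forall i, i < k -> a <> v i.
Proof.
  induction n as [|n IH]; intros k v H; simpl in H.
  - exists []. repeat split; [constructor|]. intros a [].
  - destruct H as [a [Hdist Hrest]]. rewrite distinct_from_sat, upd_same in Hdist.
    destruct (IH _ _ Hrest) as [l [Hl [Hnd Hall]]].
    exists (a :: l). repeat split; [simpl; congruence| |].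
    + constructor; [|exact Hnd]. intro Hin. apply (Hall a Hin k); [lia|]. now rewrite upd_same.
    + intros b [<-|Hb] i Hi.
      * specialize (Hdist i Hi). now rewrite upd_other in Hdist by lia.
      * specialize (Hall b Hb i). rewrite upd_other in Hall by lia. apply Hall; lia.
Qed.

Lemma at_least_sentence_sentence n : is_sentence (at_least_sentence n).
Proof. intros x Hx. apply exist_new_free in Hx. lia. Qed.

Lemma at_least_sentence_sat (A : structure sg) n :
  (forall v, fo_sat A v (at_least_sentence n)) <-> at_least A n.
Proof.
  split.
  - intro H. destruct (carrier_inhabited A) as [a0].
    destruct (exist_new_list A n 0 (fun _ => a0) (H _)) as [l [<- [Hnd _]]].
    now apply at_least_NoDup.
  - intros Hroom v. now apply exist_new_of_at_least.
Qed.

Fixpoint forall_below (k : nat) (f : formula sg) : formula sg :=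
  match k with 0 => f | S j => FAll j (forall_below j f) end.

Lemma forall_below_intro (A : structure sg) k f :
  (forall v, fo_sat A v f) -> forall v, fo_sat A v (forall_below k f).
Proof. induction k; simpl; auto. Qed.

Lemma forall_below_elim (A : structure sg) k f :
  (forall v, fo_sat A v (forall_below k f)) -> forall v, fo_sat A v f.
Proof.
  induction k as [|k IH]; simpl; auto. intros H. apply IH. intro v.
  specialize (H v (v k)). eapply fo_sat_ext; [|exact H].
  intro y. destruct (Nat.eq_dec y k) as [->|Hne]; [now rewrite upd_same|now rewrite upd_other].
Qed.

Lemma forall_below_free k f x : free_in x (forall_below k f) -> free_in x f /\ k <= x.
Proof.
  induction k as [|k IH]; simpl; intro H; [split; [exact H|lia]|].
  apply free_all_inv in H as [Hk H]. destruct (IH H). split; [assumption|lia].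
Qed.

Definition empty_sentence (s : sym sg) : formula sg :=
  forall_below (arity sg s) (FNot (FRel s (fun i => proj1_sig (Fin.to_nat i)))).

Lemma empty_sentence_sentence s : is_sentence (empty_sentence s).
Proof.
  intros x H. apply forall_below_free in H as [H Hx].
  apply free_not_inv, free_rel_inv in H as [i <-].
  destruct (Fin.to_nat i) as [p Hp]. simpl in *. lia.
Qed.

Lemma empty_sentence_sat (A : structure sg) s :
  (forall v, fo_sat A v (empty_sentence s)) <-> forall t, ~ rel A s t.
Proof.
  split.
  - intros H t Hr. destruct (carrier_inhabited A) as [a0].
    set (v x := match lt_dec x (arity sg s) with left h => t (Fin.of_nat_lt h) | right _ => a0 end).
    apply (forall_below_elim _ _ _ H v). simpl.
    replace (fun i => v (proj1_sig (Fin.to_nat i))) with t; [exact Hr|].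
    apply functional_extensionality; intro i. unfold v.
    pose proof (Fin.of_nat_to_nat_inv i) as Hi.
    destruct (Fin.to_nat i) as [p Hp]. simpl in *.
    destruct (lt_dec p (arity sg s)) as [h|h]; [|lia].
    rewrite <- Hi at 1. f_equal. apply Fin.of_nat_ext.
  - intros H. apply forall_below_intro. intros v Hr. exact (H _ Hr).
Qed.

End Sentences.

Section NonCompactness.
Context {sg : signature} (code : sym sg -> nat).
Hypothesis code_inj : Injective code.

Definition empty_code (c : nat) : formula sg :=
  match excluded_middle_informative (exists s, code s = c) with
  | left H => empty_sentence (proj1_sig (constructive_indefinite_description _ H))
  | right _ => truef
  end.

Lemma empty_code_sentence c : is_sentence (empty_code c).
Proof.
  unfold empty_code. destruct excluded_middle_informative;
    [apply empty_sentence_sentence|apply truef_sentence].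
Qed.

Lemma empty_code_sat (A : structure sg) c :
  (forall v, fo_sat A v (empty_code c)) <-> forall s, code s = c -> forall t, ~ rel A s t.
Proof.
  unfold empty_code. destruct excluded_middle_informative as [H|H].
  - destruct (constructive_indefinite_description _ H) as [s0 Hs0]. simpl.
    rewrite empty_sentence_sat. split.
    + intros H0 s Hs. rewrite <- Hs0 in Hs. apply code_inj in Hs. now subst.
    + intro H0. now apply H0.
  - split; [intros _ s Hs; exfalso; eauto|intros _ v; apply truef_sat].
Qed.

Fixpoint empty_below (c : nat) : formula sg :=
  match c with 0 => truef | S c' => FAnd (empty_below c') (empty_code c') end.

Lemma empty_below_sentence c : is_sentence (empty_below c).
Proof.
  induction c as [|c IH]; simpl; [apply truef_sentence|].
  apply is_sentence_and; [exact IH|apply empty_code_sentence].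
Qed.

Lemma empty_below_sat (A : structure sg) c :
  (forall v, fo_sat A v (empty_below c)) <-> forall s, code s < c -> forall t, ~ rel A s t.
Proof.
  induction c as [|c IH]; simpl.
  - split; [lia|intros _ v; apply truef_sat].
  - split.
    + intros H s Hs. destruct (Nat.eq_dec (code s) c) as [E|E].
      * apply (proj1 (empty_code_sat A c)); [intro v; apply H|exact E].
      * apply (proj1 IH); [intro v; apply H|lia].
    + intros H v. split.
      * revert v. apply IH. intros s Hs. apply H. lia.
      * revert v. apply empty_code_sat. intros s Hs. apply H. lia.
Qed.

(* The first-order class approximating "infinite and bare". *)
Definition large_bare (n : nat) (A : structure sg) : Prop :=
  at_least A n /\ forall s, code s < n -> forall t, ~ rel A s t.

Lemma large_bare_expressible n : FO_expressible (large_bare n).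
Proof.
  exists (FAnd (at_least_sentence n) (empty_below n)). split.
  - apply is_sentence_and; [apply at_least_sentence_sentence|apply empty_below_sentence].
  - intro A. unfold large_bare. rewrite <- at_least_sentence_sat, <- empty_below_sat.
    split; [intros [H1 H2] v; split; [apply H1|apply H2]|].
    intro H. split; intro v; apply H.
Qed.

Lemma finite_bare_large_bare m n : n <= m -> large_bare n (finite_bare sg m).
Proof.
  intro Hn. split; [apply finite_bare_at_least; lia|].
  intros s _ t. apply bare_rel_free.
Qed.

Lemma large_bare_all_rel_free_infinite (A : structure sg) :
  (forall n, large_bare n A) -> rel_free A /\ infinite A.
Proof.
  intro H. split.
  - intros s. apply (proj2 (H (S (code s)))). lia.
  - apply infinite_at_least. intro K. exact (proj1 (H K)).
Qed.

(* Part 2 of the theorem: {P} together with all large_bare n is finitely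
   satisfiable by finite bare structures but has no model. *)
Lemma property_not_compact P (L : abstract_logic sg) : extends_FO L ->
  L_expressible L (fun A => has_property P A) -> ~ aleph0_compact L.
Proof.
  intros Hext [phi Hphi] Hcompact.
  set (theta n :=
    proj1_sig (constructive_indefinite_description _ (Hext _ (large_bare_expressible n)))).
  assert (Htheta : forall n A, large_bare n A <-> lsat L A (theta n))
    by (intros n; unfold theta; destruct constructive_indefinite_description as [t Ht]; exact Ht).
  set (Gamma i := match i with 0 => phi | S n => theta n end).
  destruct (Hcompact Gamma) as [A HA].
  - intro m. exists (finite_bare sg m). intros [|n] Hn; simpl.
    + apply Hphi, finite_bare_has_property.
    + apply Htheta, finite_bare_large_bare. lia.
  - destruct (large_bare_all_rel_free_infinite A) as [Hfree Hinf];
      [intro n; apply Htheta, (HA (S n))|].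
    exact (rel_free_infinite_no_property P Hfree Hinf (proj2 (Hphi A) (HA 0))).
Qed.

End NonCompactness.

Lemma premisses_bounded {X : Type} (Gamma : nat -> X) (l : list X) :
  (forall x, In x l -> exists i, Gamma i = x) ->
  exists N, forall x, In x l -> exists i, i <= N /\ Gamma i = x.
Proof.
  induction l as [|y l IH]; intro H.
  - exists 0. intros _ [].
  - destruct IH as [N HN]; [intros; apply H; now right|].
    destruct (H y (or_introl eq_refl)) as [j Hj].
    exists (max N j). intros x [<-|Hx].
    + exists j. split; [lia|exact Hj].
    + destruct (HN x Hx) as [i [Hi Ei]]. exists i. split; [lia|exact Ei].
Qed.

(* Step 5: with negation, a sound and complete proof system gives compactness:
   an unsatisfiable set proves both some sentence and its negation, using only
   finitely many premisses, which are jointly satisfiable. *)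
Lemma compact_of_proof_system {sg : signature} (L : abstract_logic sg) :
  closed_under_negation L -> (exists PS : proof_system L, sound PS /\ complete PS) ->
  aleph0_compact L.
Proof.
  intros Hneg [PS [Hsound Hcomplete]] Gamma Hfin. apply NNPP. intro Hno.
  set (Gs phi := exists i, Gamma i = phi).
  assert (Hincons : forall psi, entails L Gs psi).
  { intros psi A HA. exfalso. apply Hno. exists A. intro i. apply HA. now exists i. }
  destruct (Hneg (Gamma 0)) as [psi Hpsi].
  destruct (Hcomplete Gs (Gamma 0) (Hincons _)) as [pi1 [Hc1 Hp1]].
  destruct (Hcomplete Gs psi (Hincons _)) as [pi2 [Hc2 Hp2]].
  destruct (premisses_bounded Gamma _ Hp1) as [N1 HN1].
  destruct (premisses_bounded Gamma _ Hp2) as [N2 HN2].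
  destruct (Hfin (max N1 N2)) as [A HA].
  assert (H1 : lsat L A (conclusion pi1)).
  { apply Hsound. intros phi Hphi. destruct (HN1 phi Hphi) as [i [Hi <-]]. apply HA. lia. }
  assert (H2 : lsat L A (conclusion pi2)).
  { apply Hsound. intros phi Hphi. destruct (HN2 phi Hphi) as [i [Hi <-]]. apply HA. lia. }
  rewrite Hc1 in H1. rewrite Hc2, Hpsi in H2. exact (H2 H1).
Qed.

Theorem mainTheorem6 (sg : signature)
  (hcount : countable_signature sg)
  (harity : exists s : sym sg, 2 <= arity sg s)
  (P : AutProperty) :
  ~ FO_expressible (fun A : structure sg => has_property P A) /\
  (forall L : abstract_logic sg, extends_FO L ->
     L_expressible L (fun A => has_property P A) -> ~ aleph0_compact L) /\
  (forall L : abstract_logic sg, extends_FO L ->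
     L_expressible L (fun A => has_property P A) -> closed_under_negation L ->
     ~ exists PS : proof_system L, sound PS /\ complete PS).
Proof.
  destruct hcount as [code code_inj].
  assert (not_compact : forall L : abstract_logic sg, extends_FO L ->
            L_expressible L (fun A => has_property P A) -> ~ aleph0_compact L)
    by exact (property_not_compact code code_inj P).
  split; [|split].
  - apply property_not_FO_expressible.
  - exact not_compact.
  - intros L Hext HL Hneg Hps. exact (not_compact L Hext HL (compact_of_proof_system L Hneg Hps)).
Qed.
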